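(* Fix a set $\mathfrak{p}$ of points. (a) If $(\mathfrak{p},\mathfrak{L})$ is a linear space, then the cograph $\mathcal{C}$ on $\mathfrak{p}$ defined by letting $\mathcal{C}(P,Q)$ be the unique line of $\mathfrak{L}$ containing $P$ and $Q$ is a PL-cograph. (b) If $\mathcal{C}$ is a PL-cograph on $\mathfrak{p}$, then letting, for each pair of distinct points $P,Q$, the line through $P$ and $Q$ be the set of all endpoints of all pairs $\{R,S\}$ with $\mathcal{C}(R,S)=\mathcal{C}(P,Q)$, yields a well-defined linear space on $\mathfrak{p}$. (c) These two constructions are mutually inverse (PL-cographs being considered up to renaming of edge values), so linear spaces on $\mathfrak{p}$ and PL-cographs on $\mathfrak{p}$ are in one-to-one correspondence.
   Context: A cograph is a function $\mathcal{C}$ assigning to each unordered pair $\{P,Q\}$ of distinct elements of a set of points a value $\mathcal{C}(P,Q)$ (an edge). A PL-cograph is a cograph satisfying: (1) for distinct points $P,Q,R$, if $\mathcal{C}(P,Q)=\mathcal{C}(Q,R)$ then $\mathcal{C}(P,Q)=\mathcal{C}(P,R)$; (2) for distinct points $P,Q,R,S$, if $\mathcal{C}(P,Q)=\mathcal{C}(R,S)$ then $\mathcal{C}(P,Q)=\mathcal{C}(P,R)=\mathcal{C}(P,S)=\mathcal{C}(Q,R)=\mathcal{C}(Q,S)$. A linear space $(\mathfrak{p},\mathfrak{L})$ consists of a set $\mathfrak{p}$ of points and a set $\mathfrak{L}$ of lines, each line a subset of $\mathfrak{p}$, such that any two distinct points belong to exactly one line and every line has at least two points. *)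

From Stdlib Require Import ClassicalEpsilon.
Set Implicit Arguments.

Section Defs.
Variables (P E : Type).

(* A cograph on P with edge values in E: a value C x y for each unordered
   pair {x,y} of distinct points; represented by a function on ordered pairs
   that is symmetric on distinct points (values on the diagonal are irrelevant). *)
Definition is_cograph (C : P -> P -> E) : Prop :=
  forall x y, x <> y -> C x y = C y x.

Definition is_PL_cograph (C : P -> P -> E) : Prop :=
  is_cograph C /\
  (forall p q r, p <> q -> q <> r -> p <> r ->
     C p q = C q r -> C p q = C p r) /\
  (forall p q r s, p <> q -> p <> r -> p <> s -> q <> r -> q <> s -> r <> s ->
     C p q = C r s ->
     C p q = C p r /\ C p q = C p s /\ C p q = C q r /\ C p q = C q s).

Definition is_linear_space (L : (P -> Prop) -> Prop) : Prop :=
  (forall x y, x <> y -> exists! l, L l /\ l x /\ l y) /\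
  (forall l, L l -> exists x y, x <> y /\ l x /\ l y).
End Defs.

Definition line_cograph (P : Type) (L : (P -> Prop) -> Prop) (x y : P)
  : P -> Prop :=
  epsilon (inhabits (fun _ : P => False)) (fun l => L l /\ l x /\ l y).

Definition cograph_line (P E : Type) (C : P -> P -> E) (x y : P) : P -> Prop :=
  fun z => exists r s, r <> s /\ C r s = C x y /\ (z = r \/ z = s).

Definition cograph_lines (P E : Type) (C : P -> P -> E) : (P -> Prop) -> Prop :=
  fun l => exists x y, x <> y /\ l = cograph_line C x y.

(* In a PL-cograph, the endpoints of all edges carrying one value e are
   pairwise joined by edges of value e: axiom (1) handles two such edges
   sharing an endpoint, axiom (2) two disjoint ones.  Hence the "line" of an
   edge value is a set of points any two of which span it, which is exactly
   what makes these sets the lines of a linear space, and the line of a value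
   determines the value.  Conversely, in a linear space two distinct points of
   a line span that line, which gives both PL axioms and the round trip from
   linear spaces back to linear spaces. *)
From Stdlib Require Import Classical ClassicalEpsilon FunctionalExtensionality
  PropExtensionality.
Set Implicit Arguments.

Section LinearSpace.
Variables (P : Type) (L : (P -> Prop) -> Prop).
Hypothesis HL : is_linear_space L.

Lemma line_cograph_spec x y : x <> y ->
  L (line_cograph L x y) /\ line_cograph L x y x /\ line_cograph L x y y.
Proof.
  intros Hxy. destruct (proj1 HL x y Hxy) as [l [Hl _]].
  unfold line_cograph. apply epsilon_spec. exists l. exact Hl.
Qed.

Lemma line_cograph_unique x y l : x <> y -> L l -> l x -> l y ->
  line_cograph L x y = l.
Proof.
  intros Hxy Hl Hx Hy. destruct (proj1 HL x y Hxy) as [m [_ Hm]].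
  transitivity m; [symmetry|]; apply Hm.
  - apply line_cograph_spec; exact Hxy.
  - auto.
Qed.

Lemma line_cograph_eq x y u v : x <> y -> u <> v ->
  line_cograph L u v x -> line_cograph L u v y ->
  line_cograph L x y = line_cograph L u v.
Proof.
  intros Hxy Huv Hx Hy. apply line_cograph_unique; auto.
  apply line_cograph_spec; exact Huv.
Qed.

Lemma line_cograph_PL : is_PL_cograph (line_cograph L).
Proof.
  split; [|split].
  - intros x y Hxy. apply line_cograph_eq; auto; apply line_cograph_spec; auto.
  - intros p q r Hpq Hqr Hpr Hpqr. symmetry. apply line_cograph_eq; auto.
    + apply line_cograph_spec; exact Hpq.
    + rewrite Hpqr. apply line_cograph_spec; exact Hqr.
  - intros p q r s Hpq Hpr Hps Hqr Hqs Hrs Hpqrs.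
    destruct (line_cograph_spec Hpq) as [_ [Hp Hq]].
    destruct (line_cograph_spec Hrs) as [_ [Hr Hs]].
    rewrite <- Hpqrs in Hr, Hs.
    repeat split; symmetry; apply line_cograph_eq; auto.
Qed.

Lemma cograph_line_line_cograph x y : x <> y ->
  cograph_line (line_cograph L) x y = line_cograph L x y.
Proof.
  intros Hxy.
  apply functional_extensionality; intro z; apply propositional_extensionality.
  split.
  - intros [r [s [Hrs [Hrsxy Hz]]]].
    destruct (line_cograph_spec Hrs) as [_ [Hr Hs]].
    rewrite Hrsxy in Hr, Hs. destruct Hz as [-> | ->]; assumption.
  - intros Hz. destruct (classic (z = x)) as [-> | Hzx].
    + exists x, y. auto.
    + exists z, x. repeat split; auto.
      apply line_cograph_eq; auto. apply line_cograph_spec; exact Hxy.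
Qed.

Lemma cograph_lines_line_cograph l :
  cograph_lines (line_cograph L) l <-> L l.
Proof.
  split.
  - intros [x [y [Hxy ->]]]. rewrite cograph_line_line_cograph by exact Hxy.
    apply line_cograph_spec; exact Hxy.
  - intros Hl. destruct (proj2 HL l Hl) as [x [y [Hxy [Hx Hy]]]].
    exists x, y. split; [exact Hxy|].
    rewrite cograph_line_line_cograph by exact Hxy.
    symmetry. apply line_cograph_unique; assumption.
Qed.

End LinearSpace.

Section PLCograph.
Variables (P E : Type) (C : P -> P -> E).
Hypothesis HC : is_PL_cograph C.

Lemma PL_cograph_triangle a b c e : a <> b -> a <> c -> b <> c ->
  C a b = e -> C a c = e -> C b c = e.
Proof.
  intros Hab Hac Hbc Habe Hace. destruct HC as [Hsym [Hpath _]].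
  rewrite <- Hace, <- (Hpath b a c); auto; rewrite Hsym; congruence.
Qed.

Lemma PL_cograph_cross_edge a b c d e : a <> b -> c <> d -> a <> c ->
  C a b = e -> C c d = e -> C a c = e.
Proof.
  intros Hab Hcd Hac Habe Hcde. destruct HC as [Hsym [_ Hdisj]].
  destruct (classic (b = c)) as [<- | Hbc]; [exact Habe|].
  destruct (classic (d = a)) as [-> | Hda]; [rewrite Hsym; auto|].
  destruct (classic (b = d)) as [<- | Hbd].
  - apply (PL_cograph_triangle (a := b)); auto; rewrite Hsym; auto.
  - rewrite <- Habe. symmetry.
    apply (Hdisj a b c d); auto; congruence.
Qed.

Lemma cograph_line_incident u v x : cograph_line C u v x ->
  exists b, x <> b /\ C x b = C u v.
Proof.
  intros [r [s [Hrs [Hrsuv [-> | ->]]]]].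
  - exists s. auto.
  - exists r. split; auto. rewrite (proj1 HC); auto.
Qed.

Lemma cograph_line_edge x y u v : x <> y ->
  cograph_line C u v x -> cograph_line C u v y -> C x y = C u v.
Proof.
  intros Hxy Hx Hy.
  destruct (cograph_line_incident Hx) as [b [Hxb Hxbuv]].
  destruct (cograph_line_incident Hy) as [d [Hyd Hyduv]].
  apply (PL_cograph_cross_edge Hxb Hyd); assumption.
Qed.

Lemma cograph_line_ends x y : x <> y ->
  cograph_line C x y x /\ cograph_line C x y y.
Proof. intros Hxy. split; exists x, y; auto. Qed.

Lemma cograph_lines_linear : is_linear_space (cograph_lines C).
Proof.
  split.
  - intros x y Hxy. exists (cograph_line C x y).
    split; [split; [exists x, y; auto | apply cograph_line_ends; exact Hxy]|].
    intros l [[u [v [_ ->]]] [Hx Hy]].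
    unfold cograph_line. rewrite (cograph_line_edge Hxy Hx Hy). reflexivity.
  - intros l [x [y [Hxy ->]]]. exists x, y. split; [exact Hxy|].
    apply cograph_line_ends; exact Hxy.
Qed.

Lemma line_cograph_cograph_lines x y : x <> y ->
  line_cograph (cograph_lines C) x y = cograph_line C x y.
Proof.
  intros Hxy. apply (line_cograph_unique cograph_lines_linear); [exact Hxy | ..].
  - exists x, y. auto.
  - apply cograph_line_ends; exact Hxy.
  - apply cograph_line_ends; exact Hxy.
Qed.

(* The renaming f of part (c); [cograph_line C x y] is definitionally
   [edge_value_line (C x y)]. *)
Definition edge_value_line (e : E) : P -> Prop :=
  fun z => exists r s, r <> s /\ C r s = e /\ (z = r \/ z = s).

Lemma edge_value_line_inj x y u v : x <> y ->
  edge_value_line (C x y) = edge_value_line (C u v) -> C x y = C u v.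
Proof.
  intros Hxy Hline. destruct (cograph_line_ends Hxy) as [Hx Hy].
  change (edge_value_line (C x y) x) in Hx.
  change (edge_value_line (C x y) y) in Hy.
  rewrite Hline in Hx, Hy. exact (cograph_line_edge Hxy Hx Hy).
Qed.

End PLCograph.

Theorem theorem5p2 (P : Type) :
  (* (a) *)
  (forall L : (P -> Prop) -> Prop,
     is_linear_space L -> is_PL_cograph (line_cograph L)) /\
  (* (b) *)
  (forall (E : Type) (C : P -> P -> E),
     is_PL_cograph C -> is_linear_space (cograph_lines C)) /\
  (* (c) linear space -> cograph -> linear space gives back L *)
  (forall L : (P -> Prop) -> Prop,
     is_linear_space L ->
     forall l, cograph_lines (line_cograph L) l <-> L l) /\
  (* (c) PL-cograph -> linear space -> cograph gives back C up to a renaming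
     of edge values (a bijection between the sets of edge values used) *)
  (forall (E : Type) (C : P -> P -> E),
     is_PL_cograph C ->
     exists f : E -> (P -> Prop),
       (forall x y, x <> y -> line_cograph (cograph_lines C) x y = f (C x y)) /\
       (forall x y u v, x <> y -> u <> v ->
          f (C x y) = f (C u v) -> C x y = C u v)).
Proof.
  split; [|split; [|split]].
  - exact (@line_cograph_PL P).
  - exact (@cograph_lines_linear P).
  - exact (@cograph_lines_line_cograph P).
  - intros E C HC. exists (edge_value_line C). split.
    + exact (line_cograph_cograph_lines HC).
    + intros x y u v Hxy _. exact (edge_value_line_inj HC u v Hxy).
Qed.
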